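(* Let $p\in(1,2]$, let $u$ be an ancient solution of the half-space problem $u_t-\Delta u=|\nabla u|^p$ in $\mathbb{R}^n_+\times(-\infty,0)$, $u=0$ on $\partial\mathbb{R}^n_+\times(-\infty,0)$, let $\varepsilon>0$ and assume $$M_1:=\sup_{\Gamma_1\times(-\infty,-\varepsilon]}|u|<\infty.$$ Then there is $C=C(n,p,M_1)>0$ such that $|u(x,t)|\le C x_n$ for all $(x,t)\in\Gamma_1\times(-\infty,-\varepsilon]$.
   Context: $\mathbb{R}^n_+:=\{x\in\mathbb{R}^n: x_n>0\}$, $\Gamma_R:=\{x\in\mathbb{R}^n: 0<x_n<R\}$. An ancient solution of the half-space problem is a function $u\in C^{2,1}(Q)\cap C(\overline Q)$, $Q=\mathbb{R}^n_+\times(-\infty,0)$, satisfying the PDE pointwise in $Q$ and $u=0$ pointwise on $\partial\mathbb{R}^n_+\times(-\infty,0)$. *)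

From HB Require Import structures.
From mathcomp Require Import all_boot all_order all_algebra.
From mathcomp Require Import all_classical all_reals all_analysis.
Set Implicit Arguments. Unset Strict Implicit. Unset Printing Implicit Defensive.
Import Order.TTheory GRing.Theory Num.Theory.
Import numFieldNormedType.Exports.
Local Open Scope classical_set_scope.
Local Open Scope ring_scope.

Section Defs.
Variables (R : realType) (N : nat).
(* space R^(N.+1); the last coordinate x_n is the entry ord_max *)
Notation pt := 'rV[R]_N.+1.

Definition xlast (x : pt) : R := x ord0 ord_max.

Definition unitv (i : 'I_N.+1) : pt := delta_mx ord0 i.

Definition dpart (i : 'I_N.+1) (f : pt -> R) (x : pt) : R := 'D_(unitv i) f x.

Definition Qset : set (pt * R) := [set z | 0 < xlast z.1 /\ z.2 < 0].
Definition Qbar : set (pt * R) := [set z | 0 <= xlast z.1 /\ z.2 <= 0].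

Definition ut (u : pt -> R -> R) (x : pt) (t : R) : R := 'D_1 (fun s => u x s) t.
Definition ux (u : pt -> R -> R) (i : 'I_N.+1) (x : pt) (t : R) : R :=
  dpart i (fun y => u y t) x.
Definition uxx (u : pt -> R -> R) (i j : 'I_N.+1) (x : pt) (t : R) : R :=
  dpart j (fun y => ux u i y t) x.

Definition cont_at (g : pt * R -> R) (z : pt * R) : Prop := g w @[w --> z] --> g z.

Definition C21_Q (u : pt -> R -> R) : Prop :=
  forall z, Qset z ->
    [/\ cont_at (fun w => u w.1 w.2) z,
        derivable (fun s => u z.1 s) z.2 1 /\ cont_at (fun w => ut u w.1 w.2) z,
        (forall i, derivable (fun y => u y z.2) z.1 (unitv i) /\
                   cont_at (fun w => ux u i w.1 w.2) z) &
        (forall i j, derivable (fun y => ux u i y z.2) z.1 (unitv j) /\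
                   cont_at (fun w => uxx u i j w.1 w.2) z)].

Definition laplacian (u : pt -> R -> R) (x : pt) (t : R) : R :=
  \sum_(i < N.+1) uxx u i i x t.

Definition gradnorm (u : pt -> R -> R) (x : pt) (t : R) : R :=
  Num.sqrt (\sum_(i < N.+1) (ux u i x t) ^+ 2).

Definition ancient_solution (p : R) (u : pt -> R -> R) : Prop :=
  [/\ C21_Q u,
      {within Qbar, continuous (fun w : pt * R => u w.1 w.2)},
      (forall x t, 0 < xlast x -> t < 0 ->
         ut u x t - laplacian u x t = (gradnorm u x t) `^ p) &
      (forall x t, xlast x = 0 -> t < 0 -> u x t = 0)].

Definition Gamma1_eps (eps : R) : set (pt * R) :=
  [set z | 0 < xlast z.1 < 1 /\ z.2 <= - eps].

Definition absvals (u : pt -> R -> R) (A : set (pt * R)) : set R :=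
  [set `|u z.1 z.2| | z in A].
End Defs.

From HB Require Import structures.
From mathcomp Require Import all_boot all_order all_algebra.
From mathcomp Require Import all_classical all_reals all_analysis.
From mathcomp Require Import ring lra.
Import Order.TTheory GRing.Theory Num.Theory.
Import numFieldNormedType.Exports. Import Num.Def.
Local Open Scope classical_set_scope.
Local Open Scope ring_scope.

(* A barrier argument on the half-strip [0 <= x_n <= 1/2, t <= -eps], where
   [|u| <= M := |M1|] by hypothesis and [u = 0] on [x_n = 0].  A weak minimum
   principle holds there for every supersolution [v] of the heat equation: if
   [v] were negative somewhere, [v] plus a small coercive penalty would attain
   a negative minimum at an interior point, where [v_t <= 0 <= Delta v] up to
   the penalty.  It is applied to [u + 2 M x_n], a supersolution since
   [u_t - Delta u = |grad u|^p >= 0], which gives [u >= - 2 M x_n]; and to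
   [- e^u + 1 + 4 E x_n - E x_n^2] with [E = e^M], because
   [(- e^u)_t - Delta (- e^u) = e^u (|grad u|^2 - |grad u|^p) >= - E] as
   [|grad u|^p <= 1 + |grad u|^2] for [p <= 2], which gives
   [u <= e^u - 1 <= 4 E x_n].  For [x_n > 1/2] the bound [|u| <= M] suffices. *)

Section OneVariable.
Context {R : realType}.

Lemma is_derive_quotient {f : R -> R} {x d : R} :
  is_derive x (1 : R) f d -> (fun h : R => h^-1 * (f (h + x) - f x)) @ 0^' --> d.
Proof.
case=> fd <-; move: fd; rewrite /derivable /derive.
rewrite (_ : (fun h : R => h^-1 *: ((f \o shift x) (h *: 1) - f x)) =
             (fun h : R => h^-1 * (f (h + x) - f x))) //.
by apply: funext => h /=; rewrite /shift /= -[h *: 1]/(h * 1) mulr1.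
Qed.

Lemma near0_punctured_ball {P : R -> Prop} : (\forall h \near 0^', P h) ->
  exists2 e : R, 0 < e & forall h, h != 0 -> `|h| < e -> P h.
Proof.
move=> /nbhs_ballP [e e0 He]; exists e => // h h0 he; apply: He => //.
by rewrite /ball /= sub0r normrN.
Qed.

Lemma deriv2_ge0_at_min (g g' : R -> R) (g2 r : R) : 0 < r ->
  (forall s, -r < s < r -> g 0 <= g s) ->
  (forall s, -r < s < r -> is_derive s (1 : R) g (g' s)) ->
  is_derive 0 (1 : R) g' g2 -> 0 <= g2.
Proof.
move=> r0 gmin gd g'd.
have g'0 : g' 0 = 0.
  have r0' : -r < 0 < r by rewrite oppr_lt0 r0.
  have : is_derive 0 (1 : R) g 0.
    apply: (@derive1_at_min _ g (-r) r) => [|t||t]; rewrite ?in_itv //=.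
    - by rewrite lerNl; lra.
    - by move=> /gd [].
    - by move=> /gmin.
  by move=> [_ D0]; case: (gd 0 r0') => _ <-.
rewrite leNgt; apply/negP => g2lt0.
have [e e0 He] := near0_punctured_ball (cvgr_lt _ (is_derive_quotient g'd) _ g2lt0).
pose s := minr e r / 2.
have s0 : 0 < s by rewrite divr_gt0 // lt_min e0 r0.
have se : s < e by rewrite /s; have := ge_min e e r; rewrite lexx /=; lra.
have sr : s < r by rewrite /s; have := ge_min r e r; rewrite lexx orbT /=; lra.
have g'_neg c : 0 < c < s -> g' c < 0.
  case/andP => c0 cs.
  have := He c (lt0r_neq0 c0); rewrite gtr0_norm // => /(_ (lt_trans cs se)).
  by rewrite addr0 g'0 subr0 pmulr_rlt0 // invr_gt0.
have gd_in c : c \in `]0, s[ -> is_derive c (1 : R) g (g' c).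
  by rewrite in_itv /= => /andP[c0 cs]; apply: gd; lra.
have g_cont : {within `[0, s], continuous g}.
  apply: derivable_within_continuous => c; rewrite in_itv /= => /andP[c0 cs].
  by case: (gd c _) => //; lra.
have [c cin] := MVT s0 gd_in g_cont.
rewrite subr0 => gs.
have := gmin s; rewrite -subr_ge0 gs pmulr_lge0 // => g'c_ge0.
have : g' c < 0 by apply: g'_neg; move: cin; rewrite in_itv.
rewrite ltNge g'c_ge0 //; lra.
Qed.

Lemma deriv_le0_at_left_min (h : R -> R) (t h1 r : R) : 0 < r ->
  (forall s, t - r < s <= t -> h t <= h s) -> is_derive t (1 : R) h h1 -> h1 <= 0.
Proof.
move=> r0 hmin hd; rewrite leNgt; apply/negP => h1_gt0.
have [e e0 He] := near0_punctured_ball (cvgr_gt _ (is_derive_quotient hd) _ h1_gt0).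
pose s := minr e r / 2.
have s0 : 0 < s by rewrite divr_gt0 // lt_min e0 r0.
have se : s < e by rewrite /s; have := ge_min e e r; rewrite lexx /=; lra.
have sr : s < r by rewrite /s; have := ge_min r e r; rewrite lexx orbT /=; lra.
have := He (- s); rewrite oppr_eq0 normrN gtr0_norm // (gt_eqF s0) => /(_ isT se).
have : 0 <= h (- s + t) - h t by rewrite subr_ge0; apply: hmin; lra.
rewrite nmulr_rgt0 ?invr_lt0 ?oppr_lt0 //; lra.
Qed.

Lemma deriv2_quad_min (h h' : R -> R) (c1 c2 h2 r : R) : 0 < r ->
  (forall s, -r < s < r -> is_derive s (1 : R) h (h' s)) -> is_derive 0 (1 : R) h' h2 ->
  (forall s, -r < s < r -> h 0 <= h s + (c1 * s + c2 * s ^+ 2)) ->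
  0 <= h2 + 2 * c2.
Proof.
move=> r0 hd h'd hmin.
apply: (@deriv2_ge0_at_min (fun s => h s + (c1 * s + c2 * s ^+ 2))
  (fun s => h' s + (c1 + 2 * c2 * s)) _ r r0).
- by move=> s /hmin; rewrite mulr0 expr0n /= mulr0 !addr0.
- move=> s /hd hds; apply: is_derive_eq; rewrite /GRing.scale /=; ring.
- apply: is_derive_eq; rewrite /GRing.scale /=; ring.
Qed.

Lemma is_derive_expN_comp {h : R -> R} {s h1 : R} : is_derive s (1 : R) h h1 ->
  is_derive s (1 : R) (fun s => - expR (h s)) (- (expR (h s) * h1)).
Proof. by move=> hd; apply: is_deriveN; exact: is_derive1_comp. Qed.

Lemma deriv2_quad_min_expN (h h' : R -> R) (c1 c2 h2 r : R) : 0 < r ->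
  (forall s, -r < s < r -> is_derive s (1 : R) h (h' s)) -> is_derive 0 (1 : R) h' h2 ->
  (forall s, -r < s < r -> - expR (h 0) <= - expR (h s) + (c1 * s + c2 * s ^+ 2)) ->
  expR (h 0) * (h2 + h' 0 ^+ 2) <= 2 * c2.
Proof.
move=> r0 hd h'd hmin.
have r0' : -r < 0 < r by rewrite oppr_lt0 r0.
suff : 0 <= - (expR (h 0) * h2 + h' 0 * (expR (h 0) * h' 0)) + 2 * c2.
  by rewrite mulrDr expr2 mulrCA; lra.
apply: (@deriv2_quad_min (fun s => - expR (h s)) (fun s => - (expR (h s) * h' s))
  c1 _ _ r r0 _ _ hmin) => [s /hd|]; first exact: is_derive_expN_comp.
have e'd := @is_derive1_comp _ expR h 0 _ _ _ (hd 0 r0').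
by apply: is_derive_eq; rewrite /GRing.scale /=; ring.
Qed.

Lemma deriv_left_lin_min {h : R -> R} {t c h1 : R} : is_derive t (1 : R) h h1 ->
  (forall s, s <= t -> h t - c * t <= h s - c * s) -> h1 <= c.
Proof.
move=> hd hmin; rewrite -subr_le0.
apply: (@deriv_le0_at_left_min (fun s => h s - c * s) t _ 1) => //.
- by move=> s /andP[_ /hmin].
- apply: is_derive_eq; rewrite /GRing.scale /=; ring.
Qed.

Lemma deriv_left_lin_min_expN {h : R -> R} {t c h1 : R} : is_derive t (1 : R) h h1 ->
  (forall s, s <= t -> - expR (h t) - c * t <= - expR (h s) - c * s) ->
  - c <= expR (h t) * h1.
Proof.
move=> hd hmin; rewrite lerNl.
exact: (deriv_left_lin_min (is_derive_expN_comp hd) hmin).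
Qed.

Lemma powR_le1Dsqr {g p : R} : 0 <= g -> 1 <= p <= 2 -> g `^ p <= 1 + g ^+ 2.
Proof.
move=> g0 /andP[p1 p2]; have g2_ge0 := sqr_ge0 g.
have [g1|g1] := leP g 1.
  suff : g `^ p <= 1 by lra.
  have [->|gn0] := eqVneq g 0; first by rewrite powR0 ?gt_eqF //; lra.
  have g01 : 0 < g <= 1 by rewrite lt_neqAle eq_sym gn0 g0 g1.
  exact: le_trans (ge1r_powR g01 p1) g1.
have : g `^ p <= g `^ 2%:R by apply: ler_powR; lra.
by rewrite powR_mulrn; lra.
Qed.

End OneVariable.

Section Lines.
Context {R : realType} {V : normedModType R}.

Lemma line_quotient (f : V -> R) (x v : V) (s0 : R) :
  (fun h : R => h^-1 *: (((fun s : R => f (x + s *: v)) \o shift s0) (h *: 1)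
                         - f (x + s0 *: v)))
  = (fun h : R => h^-1 *: ((f \o shift (x + s0 *: v)) (h *: v) - f (x + s0 *: v))).
Proof.
apply: funext => h /=; congr (_ *: (f _ - _)).
by rewrite /shift /= -[h%:A]/(h * 1) mulr1 scalerDl addrCA.
Qed.

Lemma derive_line (f : V -> R) (x v : V) (s0 : R) :
  'D_1 (fun s : R => f (x + s *: v)) s0 = 'D_v f (x + s0 *: v).
Proof. by rewrite /derive line_quotient. Qed.

Lemma derivable_line (f : V -> R) (x v : V) (s0 : R) :
  derivable f (x + s0 *: v) v -> derivable (fun s : R => f (x + s *: v)) s0 1.
Proof. by rewrite /derivable line_quotient. Qed.

End Lines.

Section HalfSpace.
Context {R : realType} {N : nat}.
Local Notation pt := 'rV[R]_N.+1.

Definition sqnorm (x : pt) : R := \sum_(i < N.+1) x ord0 i ^+ 2.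

Definition lastb (j : 'I_N.+1) : R := (ord_max == j)%:R.

Lemma lastb_sqr j : lastb j ^+ 2 = lastb j.
Proof. by rewrite /lastb; case: (ord_max == j); rewrite /= ?expr1n ?expr0n. Qed.

Lemma sum_lastb : \sum_(j < N.+1) lastb j = 1.
Proof.
rewrite (bigD1 ord_max) //= big1 ?addr0 /lastb ?eqxx // => j.
by rewrite eq_sym => /negbTE ->.
Qed.

Lemma unitvE (x : pt) (s : R) (i j : 'I_N.+1) :
  (x + s *: unitv R j) ord0 i = x ord0 i + s * (i == j)%:R.
Proof. by rewrite /unitv !mxE eqxx. Qed.

Lemma xlast_shift (x : pt) (s : R) (j : 'I_N.+1) :
  xlast (x + s *: unitv R j) = xlast x + s * lastb j.
Proof. by rewrite /xlast unitvE. Qed.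

Lemma sqnorm_ge0 (x : pt) : 0 <= sqnorm x.
Proof. by apply: sumr_ge0 => i _; exact: sqr_ge0. Qed.

Lemma sqr_coord_le_sqnorm (x : pt) (i : 'I_N.+1) : x ord0 i ^+ 2 <= sqnorm x.
Proof.
by rewrite /sqnorm (bigD1 i) //= lerDl; apply: sumr_ge0 => k _; exact: sqr_ge0.
Qed.

Lemma sqnorm_shift (x : pt) (s : R) (j : 'I_N.+1) :
  sqnorm (x + s *: unitv R j) = sqnorm x + (2 * x ord0 j * s + s ^+ 2).
Proof.
rewrite /sqnorm (bigD1 j) //= [in RHS](bigD1 j) //= unitvE eqxx.
rewrite (eq_bigr (fun i => x ord0 i ^+ 2)); last first.
  by move=> i /negbTE ij; rewrite unitvE ij mulr0 addr0.
by rewrite /=; ring.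
Qed.

Lemma continuous_sqnorm : continuous sqnorm.
Proof.
apply: (@continuous_big _ _ +%R 0 xpredT add_continuous _ _
  (fun i (y : pt) => y ord0 i ^+ 2)) => i _ x.
have xi : (fun y : pt => y ord0 i) @ x --> x ord0 i := @coord_continuous R 1 N.+1 ord0 i x.
exact: (cvgM xi xi).
Qed.

Lemma continuous_xlast_fst : continuous (fun z : pt * R => xlast z.1).
Proof. by move=> z; apply: continuous_comp; [exact: cvg_fst | exact: coord_continuous]. Qed.

Lemma continuous_sqnorm_fst : continuous (fun z : pt * R => sqnorm z.1).
Proof. by move=> z; apply: continuous_comp; [exact: cvg_fst | exact: continuous_sqnorm]. Qed.

Definition strip (t0 : R) : set (pt * R) :=
  [set z | 0 <= xlast z.1 <= 2^-1 /\ z.2 <= t0].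

Lemma strip_Qbar {t0 : R} : t0 < 0 -> strip t0 `<=` @Qbar R N.
Proof. by move=> t0_lt0 [x t] [/= /andP[x0 _] tt0]; split => //=; lra. Qed.

Lemma Qset_line {x : pt} {t s : R} (j : 'I_N.+1) :
  Qset (x, t) -> `|s| < xlast x -> Qset (x + s *: unitv R j, t).
Proof.
move=> [/= a0 t0] sa; split => //=; rewrite xlast_shift.
have := ler_norm (- s); rewrite normrN /lastb.
by case: (ord_max == j); rewrite /= ?mulr1 ?mulr0; lra.
Qed.

Lemma strip_coercive_min {W : pt * R -> R} {t0 c0 d : R} {z0 : pt * R} :
  0 < d -> strip t0 z0 -> {within strip t0, continuous W} ->
  (forall z, strip t0 z -> c0 + d * (sqnorm z.1 + (t0 - z.2)) <= W z) ->
  exists2 z, strip t0 z & forall z', strip t0 z' -> W z <= W z'.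
Proof.
move=> d0 Sz0 Wc Wco.
pose L := `|W z0 - c0| / d + 1.
have L1 : 1 <= L by rewrite /L lerDr divr_ge0 // ltW.
pose I (i : 'I_N.+1) := [set` (if i == ord_max then `[0, 2^-1] else `[- L, L])%R] : set R.
pose K := [set x : pt | forall i, I i (x ord0 i)] `*` [set` `[t0 - L, t0]%R].
have cK : compact K.
  apply: compact_setX; last exact: segment_compact.
  by apply: rV_compact => i; rewrite /I; case: (i == ord_max); exact: segment_compact.
have KS : K `<=` strip t0.
  move=> [x t] [/= /(_ ord_max)]; rewrite /I eqxx /= in_itv /= => xl.
  by rewrite in_itv /= => /andP[_ tt0]; split.
have inK z : strip t0 z -> sqnorm z.1 + (t0 - z.2) < L -> K z.
  case: z => x t [/= xl tt0] zL; have x0 := sqnorm_ge0 x; split => /=.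
    move=> i; rewrite /I; case: ifP => [/eqP -> | _] /=; rewrite in_itv //=.
    have sq_bound y : y ^+ 2 < L -> - L <= y <= L.
      by clear -L1 => yL; apply/andP; split; nra.
    by apply: sq_bound; have := sqr_coord_le_sqnorm x i; lra.
  by rewrite in_itv /=; apply/andP; split; lra.
have outK z : strip t0 z -> ~ K z -> W z0 < W z.
  move=> Sz nKz; apply: lt_le_trans (Wco z Sz).
  have : L <= sqnorm z.1 + (t0 - z.2) by rewrite leNgt; apply/negP => /(inK z Sz).
  rewrite -(ler_pM2l d0) {1}/L mulrDr mulrCA divff ?gt_eqF // !mulr1.
  by have := ler_norm (W z0 - c0); lra.
have Kz0 : K z0.
  apply: inK => //.
  suff : sqnorm z0.1 + (t0 - z0.2) <= `|W z0 - c0| / d by rewrite /L; lra.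
  rewrite ler_pdivlMr //; have := Wco z0 Sz0; have := ler_norm (W z0 - c0); lra.
have [z Kz zmin] := compact_EVT_min (ex_intro _ z0 Kz0) cK (continuous_subspaceW KS Wc).
rewrite in_setE in Kz; exists z => [|z' Sz']; first exact: KS.
case: (pselect (K z')) => [Kz'|nKz']; first by apply: zmin; rewrite in_setE.
have := outK z' Sz' nKz'; have : W z <= W z0 by apply: zmin; rewrite in_setE.
lra.
Qed.

Definition barrier (al be ga a : R) : R := al + be * a + ga * a ^+ 2.

(* The weight [N + 2] makes the spatial Laplacian of the penalty [- 2 d], which
   outweighs its time derivative [- d]. *)
Definition penalty (d t0 : R) (z : pt * R) : R :=
  d * (sqnorm z.1 + (t0 - z.2) + (N.+2)%:R * (xlast z.1 * (1 - xlast z.1))).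

Definition quad_coef (ga d : R) (j : 'I_N.+1) : R :=
  d * (1 - (N.+2)%:R * lastb j ^+ 2) + ga * lastb j ^+ 2.

(* What a minimum of [w + barrier + penalty] at an interior point of the strip
   says about [w] alone. *)
Definition penalized_min (w : pt -> R -> R) (ga d : R) (x : pt) (t : R) : Prop :=
  (forall j, exists c1 r, 0 < r /\ forall s, - r < s < r ->
     w x t <= w (x + s *: unitv R j) t + (c1 * s + quad_coef ga d j * s ^+ 2)) /\
  (forall s, s <= t -> w x t - d * t <= w x s - d * s).

Lemma sum_quad_coef (ga d : R) : \sum_(j < N.+1) quad_coef ga d j = ga - d.
Proof.
rewrite (eq_bigr (fun j => d + (ga - d * (N.+2)%:R) * lastb j)); last first.
  by move=> j _; rewrite /quad_coef lastb_sqr; ring.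
rewrite big_split /= -mulr_sumr sum_lastb sumr_const card_ord -mulr_natr.
by rewrite -!nat1r; ring.
Qed.
Lemma penalty_lb {d t0 : R} {z : pt * R} : 0 <= d -> strip t0 z ->
  d * (sqnorm z.1 + (t0 - z.2)) <= penalty d t0 z.
Proof.
move=> d0 [/andP[a0 a1] _]; rewrite /penalty ler_wpM2l // lerDl.
by apply: mulr_ge0 => //; apply: mulr_ge0; lra.
Qed.

Lemma penalty_ge0 {d t0 : R} {z : pt * R} : 0 <= d -> strip t0 z ->
  0 <= penalty d t0 z.
Proof.
move=> d0 Sz; apply: (le_trans _ (penalty_lb d0 Sz)); apply: mulr_ge0 => //.
by case: Sz => _; have := sqnorm_ge0 z.1; lra.
Qed.

Lemma continuous_barrier_penalty (al be ga d t0 : R) :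
  continuous (fun z : pt * R => barrier al be ga (xlast z.1) + penalty d t0 z).
Proof.
have xl := continuous_xlast_fst; have sq := continuous_sqnorm_fst.
move=> z; apply: cvgD; rewrite /barrier /penalty.
  apply: cvgD; [apply: cvgD; [exact: cvg_cst|] | rewrite expr2];
    by repeat apply: cvgM; (exact: cvg_cst || exact: xl).
apply: cvgM; first exact: cvg_cst.
apply: cvgD; first by apply: cvgD; [exact: sq | apply: cvgB; [exact: cvg_cst | exact: cvg_snd]].
apply: cvgM; first exact: cvg_cst.
by apply: cvgM; [exact: xl | apply: cvgB; [exact: cvg_cst | exact: xl]].
Qed.

Section MinimumPrinciple.
Variables (w : pt -> R -> R) (al be ga t0 c0 : R).
Hypothesis w_cont : {within strip t0, continuous (fun z : pt * R => w z.1 z.2)}.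
Hypothesis w_lb : forall z, strip t0 z -> c0 <= w z.1 z.2 + barrier al be ga (xlast z.1).
Hypothesis w_faces : forall x t, t <= t0 -> xlast x = 0 \/ xlast x = 2^-1 ->
  0 <= w x t + barrier al be ga (xlast x).
Hypothesis no_penalized_min : forall d x t, 0 < d -> 0 < xlast x < 2^-1 -> t <= t0 ->
  ~ penalized_min w ga d x t.

Let W (d : R) (z : pt * R) := w z.1 z.2 + (barrier al be ga (xlast z.1) + penalty d t0 z).

Let lin_coef d (x : pt) j := be * lastb j + 2 * ga * xlast x * lastb j
  + d * (2 * x ord0 j + (N.+2)%:R * lastb j * (1 - 2 * xlast x)).

Let W_space_shift d (x : pt) t s j : W d (x + s *: unitv R j, t) = W d (x, t)
  + (w (x + s *: unitv R j) t - w x t) + (lin_coef d x j * s + quad_coef ga d j * s ^+ 2).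
Proof.
by rewrite /W /lin_coef /barrier /penalty /quad_coef /= xlast_shift sqnorm_shift; ring.
Qed.

Let W_time_shift d (x : pt) t s : W d (x, s) = W d (x, t) + (w x s - w x t) + d * (t - s).
Proof. by rewrite /W /penalty /=; ring. Qed.

Let interior_min_penalized d x t : 0 < xlast x < 2^-1 -> t <= t0 ->
  (forall z, strip t0 z -> W d (x, t) <= W d z) -> penalized_min w ga d x t.
Proof.
move=> /andP[a0 a1] tt0 Wmin; split=> [j|s st]; last first.
  have Sxs : strip t0 (x, s) by split => /=; [apply/andP; split; lra | lra].
  by have := Wmin _ Sxs; rewrite (W_time_shift d x t s); lra.
pose r := minr (xlast x) (2^-1 - xlast x).
have [ra rb] : r <= xlast x /\ r <= 2^-1 - xlast x
  by rewrite /r; split; rewrite ge_min lexx ?orbT.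
exists (lin_coef d x j), r.
split=> [|s /andP[s1 s2]]; first by rewrite lt_min a0; lra.
have Sxs : strip t0 (x + s *: unitv R j, t).
  split=> //=; rewrite xlast_shift /lastb.
  by case: (ord_max == j); rewrite /= ?mulr1 ?mulr0; apply/andP; split; lra.
by have := Wmin _ Sxs; rewrite W_space_shift; lra.
Qed.

Let penalized_W_ge0 d : 0 < d -> forall z, strip t0 z -> 0 <= W d z.
Proof.
move=> d0 z0 Sz0; rewrite leNgt; apply/negP => Wz0.
have Wc : {within strip t0, continuous (W d)}.
  move=> z; apply: cvgD; first exact: w_cont.
  exact: continuous_subspaceT (continuous_barrier_penalty _ _ _ _ _) z.
have Wco z : strip t0 z -> c0 + d * (sqnorm z.1 + (t0 - z.2)) <= W d z.
  by move=> Sz; have := w_lb z Sz; have := penalty_lb (ltW d0) Sz; rewrite /W; lra.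
have [[x t] Sxt Wmin] := strip_coercive_min d0 Sz0 Wc Wco.
have Wxt : W d (x, t) < 0 := le_lt_trans (Wmin _ Sz0) Wz0.
have [/= /andP[a0 a1] tt0] := Sxt.
have off_faces : xlast x = 0 \/ xlast x = 2^-1 -> False.
  move=> /(w_faces x t tt0); have := penalty_ge0 (ltW d0) Sxt; move: Wxt; rewrite /W /=; lra.
have ax : 0 < xlast x < 2^-1.
  rewrite !lt_neqAle a0 a1 !andbT; apply/andP; split; apply/eqP => e; apply: off_faces.
    by left.
  by right.
exact: (no_penalized_min d x t d0 ax tt0 (interior_min_penalized d x t ax tt0 Wmin)).
Qed.

Lemma strip_min_principle x t : strip t0 (x, t) ->
  0 <= w x t + barrier al be ga (xlast x).
Proof.
move=> Sxt; apply/ler_addgt0Pr => e e0.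
pose Phi := penalty 1 t0 (x, t).
have Phi0 : 0 <= Phi := penalty_ge0 ler01 Sxt.
have d0 : 0 < e / (Phi + 1) by rewrite divr_gt0 //; lra.
have := penalized_W_ge0 _ d0 _ Sxt; rewrite /W /=.
have -> : penalty (e / (Phi + 1)) t0 (x, t) = e / (Phi + 1) * Phi.
  by rewrite /Phi /penalty mul1r.
have : e / (Phi + 1) * Phi <= e.
  by rewrite mulrAC ler_pdivrMr; [nra | lra].
lra.
Qed.

End MinimumPrinciple.
End HalfSpace.

Section HeatBarriers.
Context {R : realType} {N : nat}.
Local Notation pt := 'rV[R]_N.+1.

Lemma is_derive_line {u : pt -> R -> R} {x : pt} {t s : R} {j : 'I_N.+1} :
  C21_Q u -> Qset (x + s *: unitv R j, t) ->
  is_derive s (1 : R) (fun s => u (x + s *: unitv R j) t) (ux u j (x + s *: unitv R j) t).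
Proof.
move=> C21 Q; have [_ _ /(_ j) [/= dv _] _] := C21 _ Q.
rewrite /ux /dpart -(@derive_line _ _ (fun y => u y t)).
by apply: derivableP; exact: (@derivable_line _ _ (fun y => u y t)).
Qed.

Lemma is_derive_line_ux {u : pt -> R -> R} {x : pt} {t : R} (j : 'I_N.+1) :
  C21_Q u -> Qset (x, t) ->
  is_derive 0 (1 : R) (fun s => ux u j (x + s *: unitv R j) t) (uxx u j j x t).
Proof.
move=> C21 Q; have [_ _ _ /(_ j j) [/= dv _]] := C21 _ Q.
have := @derive_line _ _ (fun y => ux u j y t) x (unitv R j) 0.
rewrite scale0r addr0 /uxx /dpart => <-.
apply: derivableP; apply: (@derivable_line _ _ (fun y => ux u j y t)).
by rewrite scale0r addr0.
Qed.

Lemma is_derive_ut {u : pt -> R -> R} {x : pt} {t : R} :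
  C21_Q u -> Qset (x, t) -> is_derive t (1 : R) (fun s => u x s) (ut u x t).
Proof. by move=> C21 Q; have [_ [/= dv _] _ _] := C21 _ Q; exact: derivableP. Qed.

Lemma penalized_min_line {w : pt -> R -> R} {ga d : R} {x : pt} {t : R} (j : 'I_N.+1) :
  0 < xlast x -> penalized_min w ga d x t ->
  exists c1 r, 0 < r /\ forall s, - r < s < r -> `|s| < xlast x /\
    w (x + 0 *: unitv R j) t <= w (x + s *: unitv R j) t + (c1 * s + quad_coef ga d j * s ^+ 2).
Proof.
move=> a0 [/(_ j) [c1 [r [r0 wmin]]] _].
exists c1, (minr r (xlast x)); split=> [|s]; first by rewrite lt_min r0.
rewrite -ltr_norml lt_min => /andP[sr sa]; split=> //.
by rewrite scale0r addr0; apply: wmin; rewrite -ltr_norml.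
Qed.

Lemma penalized_min_heat {u : pt -> R -> R} {ga d : R} {x : pt} {t : R} :
  C21_Q u -> Qset (x, t) -> penalized_min u ga d x t ->
  2 * (d - ga) <= laplacian u x t /\ ut u x t <= d.
Proof.
move=> C21 Q pm; split; last exact: deriv_left_lin_min (is_derive_ut C21 Q) pm.2.
have dir j : 0 <= uxx u j j x t + 2 * quad_coef ga d j.
  have [c1 [r [r0 wmin]]] := penalized_min_line j Q.1 pm.
  apply: (@deriv2_quad_min R (fun s => u (x + s *: unitv R j) t)
    (fun s => ux u j (x + s *: unitv R j) t) c1 _ _ r r0 _ (is_derive_line_ux j C21 Q)).
  - by move=> s /wmin [sa _]; exact: is_derive_line C21 (Qset_line j Q sa).
  - by move=> s /wmin [].
have : 0 <= \sum_(j < N.+1) (uxx u j j x t + 2 * quad_coef ga d j).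
  by apply: sumr_ge0 => j _; exact: dir.
by rewrite big_split /= -mulr_sumr sum_quad_coef /laplacian; lra.
Qed.

Lemma penalized_min_heat_expN {u : pt -> R -> R} {ga d : R} {x : pt} {t : R} :
  C21_Q u -> Qset (x, t) -> penalized_min (fun y s => - expR (u y s)) ga d x t ->
  expR (u x t) * (laplacian u x t + \sum_(j < N.+1) ux u j x t ^+ 2) <= 2 * (ga - d)
  /\ - d <= expR (u x t) * ut u x t.
Proof.
move=> C21 Q pm; split; last exact: deriv_left_lin_min_expN (is_derive_ut C21 Q) pm.2.
have dir j : expR (u x t) * (uxx u j j x t + ux u j x t ^+ 2) <= 2 * quad_coef ga d j.
  have [c1 [r [r0 wmin]]] := penalized_min_line j Q.1 pm.
  have x0 : x = x + 0 *: unitv R j by rewrite scale0r addr0.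
  (* exhibit [h 0] and [h' 0] for the line functions [h], [h'] below *)
  rewrite {1 3}x0.
  apply: (@deriv2_quad_min_expN R (fun s => u (x + s *: unitv R j) t)
    (fun s => ux u j (x + s *: unitv R j) t) c1 _ _ r r0 _ (is_derive_line_ux j C21 Q)).
  - by move=> s /wmin [sa _]; exact: is_derive_line C21 (Qset_line j Q sa).
  - by move=> s /wmin [].
have : \sum_(j < N.+1) expR (u x t) * (uxx u j j x t + ux u j x t ^+ 2)
       <= \sum_(j < N.+1) 2 * quad_coef ga d j by apply: ler_sum => j _; exact: dir.
by rewrite -!mulr_sumr big_split sum_quad_coef /laplacian.
Qed.

End HeatBarriers.

Section AncientBarriers.
Context {R : realType} {N : nat}.
Local Notation pt := 'rV[R]_N.+1.

Lemma ancient_abs_le_strip {p M t0 : R} {u : pt -> R -> R} :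
  ancient_solution p u -> t0 < 0 -> 0 <= M ->
  (forall x t, 0 < xlast x < 1 -> t <= t0 -> `|u x t| <= M) ->
  forall z, strip t0 z -> `|u z.1 z.2| <= M.
Proof.
move=> [_ _ _ u_bd] t0_lt0 M0 u_le [x t] [/= /andP[a0 a1] tt0].
have [a_eq0|a_neq0] := eqVneq (xlast x) 0.
  by rewrite u_bd ?normr0 // (le_lt_trans tt0).
by apply: u_le => //; rewrite lt_neqAle eq_sym a_neq0 a0 /=; lra.
Qed.

Lemma ancient_lower_barrier {p M t0 : R} {u : pt -> R -> R} :
  ancient_solution p u -> t0 < 0 -> (forall z, strip t0 z -> `|u z.1 z.2| <= M) ->
  forall x t, strip t0 (x, t) -> - (2 * M * xlast x) <= u x t.
Proof.
move=> [C21 u_cont u_pde u_bd] t0_lt0 u_bounded x t Sxt.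
suff : 0 <= u x t + barrier 0 (2 * M) 0 (xlast x) by rewrite /barrier; lra.
apply: (@strip_min_principle _ _ u 0 (2 * M) 0 t0 (- M)) Sxt.
- exact: continuous_subspaceW (strip_Qbar t0_lt0) u_cont.
- move=> z Sz; have [/andP[a0 _] _] := Sz.
  have := u_bounded z Sz; rewrite ler_norml /barrier => /andP[uM Mu].
  have : 0 <= 2 * M * xlast z.1 by apply: mulr_ge0 => //; apply: mulr_ge0; lra.
  lra.
- move=> y s st [a_eq0|a_half]; rewrite /barrier.
    by rewrite u_bd ?a_eq0 //; lra.
  have Sys : strip t0 (y, s) by split=> //=; rewrite a_half; apply/andP; split; lra.
  have := u_bounded _ Sys; rewrite ler_norml a_half => /andP[uM _].
  have : 2 * M * 2^-1 = M by rewrite mulrAC divff ?mul1r.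
  lra.
- move=> d y s d0 ax st pm; have Q : Qset (y, s) by split=> /=; [case/andP: ax | lra].
  have [lap ut_le] := penalized_min_heat C21 Q pm.
  have := u_pde y s Q.1 Q.2; have := powR_ge0 (gradnorm u y s) p; lra.
Qed.

Lemma ancient_upper_barrier {p M t0 : R} {u : pt -> R -> R} : 1 <= p <= 2 ->
  ancient_solution p u -> t0 < 0 -> (forall z, strip t0 z -> `|u z.1 z.2| <= M) ->
  forall x t, strip t0 (x, t) -> u x t <= 4 * expR M * xlast x.
Proof.
move=> p12 [C21 u_cont u_pde u_bd] t0_lt0 u_bounded x t Sxt.
have E0 := expR_gt0 M.
have expu_le z : strip t0 z -> expR (u z.1 z.2) <= expR M.
  by move=> Sz; rewrite ler_expR; have := u_bounded z Sz; rewrite ler_norml => /andP[].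
suff : 0 <= - expR (u x t) + barrier 1 (4 * expR M) (- expR M) (xlast x).
  rewrite /barrier; have := expR_ge1Dx (u x t).
  have : 0 <= expR M * xlast x ^+ 2 by apply: mulr_ge0; [lra | exact: sqr_ge0].
  lra.
apply: (@strip_min_principle _ _ (fun y s => - expR (u y s))
  1 (4 * expR M) (- expR M) t0 (1 - expR M)) Sxt.
- move=> z; apply: cvgN; apply: continuous_comp; last exact: continuous_expR.
  exact: continuous_subspaceW (strip_Qbar t0_lt0) u_cont z.
- move=> z Sz; have [/andP[a0 a1] _] := Sz; have := expu_le z Sz; rewrite /barrier.
  have : 0 <= expR M * (xlast z.1 * (4 - xlast z.1)).
    by apply: mulr_ge0; [lra | apply: mulr_ge0; lra].
  lra.
- move=> y s st [a_eq0|a_half]; rewrite /barrier.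
    by rewrite u_bd ?a_eq0 ?expR0 //; lra.
  have Sys : strip t0 (y, s) by split=> //=; rewrite a_half; apply/andP; split; lra.
  have := expu_le _ Sys; rewrite a_half /=.
  have -> : 1 + 4 * expR M * 2^-1 + - expR M * 2^-1 ^+ 2 = 1 + expR M * (7 / 4) by field.
  lra.
- move=> d y s d0 ax st pm; have Q : Qset (y, s) by split=> /=; [case/andP: ax | lra].
  have [lap_grad ut_ge] := penalized_min_heat_expN C21 Q pm.
  have eu : expR (u y s) <= expR M.
    by apply: (expu_le (y, s)); split=> //=; case/andP: ax => *; apply/andP; split; lra.
  have eu0 := expR_gt0 (u y s).
  have S0 : 0 <= \sum_(j < N.+1) ux u j y s ^+ 2 by apply: sumr_ge0 => j _; exact: sqr_ge0.
  have := powR_le1Dsqr (sqrtr_ge0 (\sum_(j < N.+1) ux u j y s ^+ 2)) p12.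
  rewrite sqr_sqrtr // -/(gradnorm u y s) -(u_pde y s Q.1 Q.2) => pde_le.
  have : expR (u y s) * (ut u y s - laplacian u y s - \sum_(j < N.+1) ux u j y s ^+ 2)
         <= expR (u y s) * 1 by rewrite ler_pM2l //; lra.
  lra.
Qed.

End AncientBarriers.

Theorem lemma5p6 (R : realType) (N : nat) (p : R) (hp : 1 < p <= 2) (M1 : R) :
  exists C : R, 0 < C /\
    forall (u : 'rV[R]_N.+1 -> R -> R) (eps : R),
      ancient_solution p u -> 0 < eps ->
      has_ubound (absvals u (Gamma1_eps eps)) ->
      sup (absvals u (Gamma1_eps eps)) = M1 ->
      forall (x : 'rV[R]_N.+1) (t : R), @Gamma1_eps R N eps (x, t) ->
        `|u x t| <= C * xlast x.
Proof.
pose M := `|M1|; have M0 : 0 <= M := normr_ge0 M1; have E0 := expR_gt0 M.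
have p12 : 1 <= p <= 2 by case/andP: hp => p1 ->; rewrite ltW.
exists (2 * M + 4 * expR M); split; first lra.
move=> u eps anc eps0 hub hsup x t [/= ax teps]; have /andP[a0 a1] := ax.
have u_le y s : 0 < xlast y < 1 -> s <= - eps -> `|u y s| <= M.
  move=> ys se; apply: (le_trans _ (ler_norm M1)); rewrite -hsup.
  by apply: (ub_le_sup hub); exists (y, s).
have [a_le|a_gt] := leP (xlast x) 2^-1; last first.
  have := u_le x t ax teps.
  have : 0 <= 4 * expR M * xlast x by apply: mulr_ge0; lra.
  have : M <= 2 * M * xlast x by nra.
  lra.
have t0_lt0 : - eps < 0 by lra.
have u_strip := ancient_abs_le_strip anc t0_lt0 M0 u_le.
have Sxt : strip (- eps) (x, t) by split=> //=; rewrite a_le ltW.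
have lo := ancient_lower_barrier anc t0_lt0 u_strip _ _ Sxt.
have up := ancient_upper_barrier p12 anc t0_lt0 u_strip _ _ Sxt.
rewrite ler_norml mulrDl; apply/andP; split.
  have : 0 <= 4 * expR M * xlast x by apply: mulr_ge0; lra.
  lra.
have : 0 <= 2 * M * xlast x by apply: mulr_ge0; lra.
lra.
Qed.
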